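(* Let $G$ be a countable infinite group, let $N\lhd G$ be a finite normal subgroup and let $H=G/N$. If the universal minimal flow $M(H)$ has the separated covering property (as an $H$-flow), then $M(G)$ has the separated covering property (as a $G$-flow).
   Context: The universal minimal flow $M(G)$ is the (unique up to isomorphism) minimal $G$-flow admitting a $G$-equivariant continuous surjection onto every minimal $G$-flow. For finite $D\subseteq G$, $S\subseteq G$ is $D$-separated if $Dg\cap Dh=\emptyset$ for distinct $g,h\in S$. A minimal $G$-flow $X$ has the separated covering property if for every finite $D\subseteq G$ and every non-empty open $U\subseteq X$ there is a $D$-separated $S\subseteq G$ with $S^{-1}U=X$. *)

From Stdlib Require Import List.
Import ListNotations.
Set Implicit Arguments.

Record Group := {
  gcar :> Type;
  gmul : gcar -> gcar -> gcar;
  gone : gcar;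
  ginv : gcar -> gcar;
  gmulA : forall x y z, gmul x (gmul y z) = gmul (gmul x y) z;
  gmul1l : forall x, gmul gone x = x;
  gmul1r : forall x, gmul x gone = x;
  gmulVl : forall x, gmul (ginv x) x = gone;
  gmulVr : forall x, gmul x (ginv x) = gone
}.

Arguments gmul {g} _ _.
Arguments gone {g}.
Arguments ginv {g} _.

Definition countable_type (T : Type) : Prop :=
  exists f : nat -> T, forall x, exists n, f n = x.

Definition infinite_type (T : Type) : Prop :=
  forall l : list T, exists x, ~ In x l.

Definition is_subgroup {G : Group} (N : G -> Prop) : Prop :=
  N gone /\ (forall x y, N x -> N y -> N (gmul x y)) /\ (forall x, N x -> N (ginv x)).

Definition is_normal_subgroup {G : Group} (N : G -> Prop) : Prop :=
  is_subgroup N /\ forall g n, N n -> N (gmul (gmul g n) (ginv g)).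

Definition finite_pred (T : Type) (P : T -> Prop) : Prop :=
  exists l : list T, forall x, P x -> In x l.

Definition is_hom {G H : Group} (f : G -> H) : Prop :=
  forall x y, f (gmul x y) = gmul (f x) (f y).

(** [pi : G -> H] is a quotient map G -> G/N : a surjective homomorphism
    with kernel exactly N (so H is G/N up to canonical isomorphism). *)
Definition is_quotient_map {G H : Group} (N : G -> Prop) (pi : G -> H) : Prop :=
  is_hom pi /\ (forall h, exists g, pi g = h) /\ (forall g, pi g = gone <-> N g).

Record Topology (X : Type) := {
  is_open : (X -> Prop) -> Prop;
  open_full : is_open (fun _ => True);
  open_inter : forall U V, is_open U -> is_open V -> is_open (fun x => U x /\ V x);
  open_union : forall F : (X -> Prop) -> Prop,
      (forall U, F U -> is_open U) -> is_open (fun x => exists U, F U /\ U x)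
}.

Definition is_closed (X : Type) (t : Topology X) (C : X -> Prop) : Prop :=
  is_open t (fun x => ~ C x).

Definition compact (X : Type) (t : Topology X) : Prop :=
  forall F : (X -> Prop) -> Prop,
    (forall U, F U -> is_open t U) ->
    (forall x, exists U, F U /\ U x) ->
    exists l : list (X -> Prop),
      (forall U, In U l -> F U) /\ (forall x, exists U, In U l /\ U x).

Definition hausdorff (X : Type) (t : Topology X) : Prop :=
  forall x y, x <> y -> exists U V, is_open t U /\ is_open t V /\ U x /\ V y /\
    (forall z, ~ (U z /\ V z)).

Definition continuous (X Y : Type) (tX : Topology X) (tY : Topology Y) (f : X -> Y) : Prop :=
  forall V, is_open tY V -> is_open tX (fun x => V (f x)).

(** * Flows of a (discrete) group: compact Hausdorff spaces with a
    continuous action (G carries the discrete topology). *)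
Record Flow (G : Group) := {
  fcar :> Type;
  ftop : Topology fcar;
  fact : G -> fcar -> fcar;
  fact_one : forall x, fact gone x = x;
  fact_mul : forall g h x, fact (gmul g h) x = fact g (fact h x);
  fact_cont : forall g, continuous ftop ftop (fact g);
  fcompact : compact ftop;
  fhausdorff : hausdorff ftop
}.

Arguments ftop {G} f.
Arguments fact {G} f _ _.

Definition minimal_flow {G : Group} (X : Flow G) : Prop :=
  (exists x : X, True) /\
  forall C : X -> Prop, is_closed (ftop X) C ->
    (forall g x, C x -> C (fact X g x)) ->
    (forall x, ~ C x) \/ (forall x, C x).

Definition flow_morphism {G : Group} {X Y : Flow G} (f : X -> Y) : Prop :=
  continuous (ftop X) (ftop Y) f /\ forall g x, f (fact X g x) = fact Y g (f x).

Definition universal_minimal_flow {G : Group} (X : Flow G) : Prop :=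
  minimal_flow X /\
  forall Y : Flow G, minimal_flow Y ->
    exists f : X -> Y, flow_morphism f /\ forall y, exists x, f x = y.

Definition separated {G : Group} (D : list G) (S : G -> Prop) : Prop :=
  forall g h, S g -> S h -> g <> h ->
    forall d1 d2, In d1 D -> In d2 D -> gmul d1 g <> gmul d2 h.

(** Separated covering property: S^{-1} U = X, i.e. every x has s ∈ S with s x ∈ U. *)
Definition separated_covering {G : Group} (X : Flow G) : Prop :=
  forall (D : list G) (U : X -> Prop), is_open (ftop X) U -> (exists x, U x) ->
    exists S : G -> Prop, separated D S /\
      forall x : X, exists s, S s /\ U (fact X s x).

(** Let [pi : G -> H] be a quotient map with finite kernel [N] and let [X] be
    a minimal [G]-flow.  The orbit space [X/N] is a minimal [H]-flow (it is
    Hausdorff because [N] is finite), and [M(H)] maps onto it, so [X/N]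
    inherits the separated covering property from [M(H)] (the property passes
    to factors).  To lift it back to [X], fix [D] and an open [U] containing
    [x0].  Since the return times of [x0] to [U] are infinite, we can choose,
    for every [k] in [N], a return time [c_k] of [k^-1 x0] so that the [c_k]
    are [D]-separated.  The open set [V] of points [z] with [c_k k^-1 z] in
    [U] for all [k] contains [x0]; a set [S'] witnessing the property in
    [X/N] for the image of [V] and the finite set [pi(D c_k)] lifts to the
    [D]-separated set [{c_k s | s lifts S'}], which satisfies [S^-1 U = X]. *)

From Stdlib Require Import List Classical ClassicalEpsilon FunctionalExtensionality
  PropExtensionality ProofIrrelevance.
Import ListNotations.
Set Implicit Arguments.

Section GroupFacts.
Variable G : Group.

Lemma gmulKl (a x : G) : gmul (ginv a) (gmul a x) = x.
Proof. rewrite gmulA, gmulVl, gmul1l. reflexivity. Qed.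

Lemma gmulKr (a x : G) : gmul (gmul x a) (ginv a) = x.
Proof. rewrite <- gmulA, gmulVr, gmul1r. reflexivity. Qed.

Lemma gmulVKr (a x : G) : gmul (gmul x (ginv a)) a = x.
Proof. rewrite <- gmulA, gmulVl, gmul1r. reflexivity. Qed.

Lemma gcancel_l (a x y : G) : gmul a x = gmul a y -> x = y.
Proof. intros h. rewrite <- (gmulKl a x), h. apply gmulKl. Qed.

Lemma gcancel_r (a x y : G) : gmul x a = gmul y a -> x = y.
Proof. intros h. rewrite <- (gmulKr a x), h. apply gmulKr. Qed.
End GroupFacts.

Lemma hom_one (G H : Group) (pi : G -> H) : is_hom pi -> pi gone = gone.
Proof.
  intros hp. apply gcancel_l with (pi gone). rewrite <- hp, gmul1l, gmul1r. reflexivity.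
Qed.

Lemma hom_inv (G H : Group) (pi : G -> H) :
  is_hom pi -> forall g, pi (ginv g) = ginv (pi g).
Proof.
  intros hp g. apply gcancel_l with (pi g). rewrite <- hp, !gmulVr. apply hom_one; auto.
Qed.

Lemma fact_inv_l (G : Group) (X : Flow G) (g : G) (x : X) :
  fact X (ginv g) (fact X g x) = x.
Proof. rewrite <- fact_mul, gmulVl, fact_one. reflexivity. Qed.

Lemma finite_pred_exact (T : Type) (P : T -> Prop) :
  finite_pred P -> exists l, forall x, In x l <-> P x.
Proof.
  intros [l hl].
  assert (hsub : exists l', (forall x, In x l' -> P x) /\ forall x, In x l -> P x -> In x l').
  { clear hl. induction l as [|a l [l' [h1 h2]]].
    - exists nil. split; [intros x []|intros x []].
    - destruct (classic (P a)) as [pa|npa].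
      + exists (a :: l'). split.
        * intros x [<-|hx]; auto.
        * intros x [<-|hx] px; [left|right]; auto.
      + exists l'. split; auto. intros x [<-|hx] px; [contradiction|auto]. }
  destruct hsub as [l' [h1 h2]]. exists l'. intros x; split; auto.
Qed.

Lemma list_choice (A B : Type) (R : A -> B -> Prop) (l : list B) :
  (forall b, In b l -> exists a, R a b) ->
  exists la, forall b, In b l -> exists a, In a la /\ R a b.
Proof.
  induction l as [|b l IH]; intros h.
  - exists nil. intros b [].
  - destruct (h b (or_introl eq_refl)) as [a ha].
    destruct IH as [la hla]. { intros b' hb'; apply h; right; auto. }
    exists (a :: la). intros b' [<-|hb'].
    + exists a. split; auto. left; auto.
    + destruct (hla b' hb') as [a' [ha' hr]]. exists a'. split; auto. right; auto.
Qed.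

Lemma open_ext (T : Type) (t : Topology T) (U V : T -> Prop) :
  is_open t U -> (forall x, U x <-> V x) -> is_open t V.
Proof.
  intros hU hUV. replace V with U; auto.
  apply functional_extensionality; intro x; apply propositional_extensionality; auto.
Qed.

Lemma open_inter_list (T A : Type) (t : Topology T) (l : list A) (W : A -> T -> Prop) :
  (forall a, In a l -> is_open t (W a)) -> is_open t (fun x => forall a, In a l -> W a x).
Proof.
  induction l as [|a l IH]; intros hW.
  - apply open_ext with (fun _ => True); [apply open_full|].
    intros x; split; intros _; [intros a []|exact I].
  - apply open_ext with (fun x => W a x /\ (forall b, In b l -> W b x)).
    + apply open_inter; [apply hW; left; auto|].
      apply IH; intros b hb; apply hW; right; auto.
    + intros x; split.
      * intros [h1 h2] b [<-|hb]; auto.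
      * intros h; split; [apply h; left; auto|intros b hb; apply h; right; auto].
Qed.

Lemma open_union_indexed (T I : Type) (t : Topology T) (P : I -> Prop) (W : I -> T -> Prop) :
  (forall i, P i -> is_open t (W i)) -> is_open t (fun x => exists i, P i /\ W i x).
Proof.
  intros hW.
  apply open_ext with (fun x => exists V, (exists i, P i /\ V = W i) /\ V x).
  - apply open_union. intros V [i [hi ->]]. auto.
  - intros x; split.
    + intros [V [[i [hi ->]] hv]]. eauto.
    + intros [i [hi hw]]. exists (W i). eauto.
Qed.

Definition exterior (T : Type) (t : Topology T) (U : T -> Prop) : T -> Prop :=
  fun p => exists V, is_open t V /\ V p /\ forall z, ~ (U z /\ V z).

Lemma exterior_open (T : Type) (t : Topology T) (U : T -> Prop) : is_open t (exterior t U).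
Proof.
  apply open_ext with (fun p => exists V, (is_open t V /\ forall z, ~ (U z /\ V z)) /\ V p).
  - apply open_union. intros V [h _]; auto.
  - intros p; split.
    + intros [V [[a b] c]]. exists V; auto.
    + intros [V [a [b c]]]. exists V; auto.
Qed.

Lemma exterior_disjoint (T : Type) (t : Topology T) (U : T -> Prop) (p : T) :
  exterior t U p -> ~ U p.
Proof. intros [V [_ [hv hd]]] hu. exact (hd p (conj hu hv)). Qed.

Lemma separate_from_finite (T : Type) (t : Topology T) (x : T) (ps : list T) :
  hausdorff t -> (forall p, In p ps -> x <> p) ->
  exists U, is_open t U /\ U x /\ forall p, In p ps -> exterior t U p.
Proof.
  intros hT. induction ps as [|p ps IH]; intros hne.
  - exists (fun _ => True). split; [apply open_full|]. split; [exact I|]. intros p [].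
  - destruct IH as [U2 [hU2 [hx2 hext]]]. { intros q hq; apply hne; right; auto. }
    destruct (hT x p (hne p (or_introl eq_refl))) as [U1 [V1 [hU1 [hV1 [hx1 [hp1 hd1]]]]]].
    exists (fun z => U1 z /\ U2 z). split; [apply open_inter; auto|]. split; [auto|].
    intros q [<-|hq].
    + exists V1. split; auto. split; auto. intros z [[a _] c]. exact (hd1 z (conj a c)).
    + destruct (hext q hq) as [V [hV [hv hd]]]. exists V. split; auto. split; auto.
      intros z [[_ b] c]. exact (hd z (conj b c)).
Qed.

Lemma compact_indexed (T I : Type) (t : Topology T) (W : I -> T -> Prop) :
  compact t -> (forall i, is_open t (W i)) -> (forall x, exists i, W i x) ->
  exists l : list I, forall x, exists i, In i l /\ W i x.
Proof.
  intros hc hW hcov.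
  destruct (hc (fun V => exists i, V = W i)) as [l [hl hlcov]].
  - intros V [i ->]. auto.
  - intros x. destruct (hcov x) as [i hi]. exists (W i). eauto.
  - destruct (list_choice (fun i V => V = W i) l) as [li hli].
    + intros V hV. destruct (hl V hV) as [i ->]. eauto.
    + exists li. intros x. destruct (hlcov x) as [V [hV hv]].
      destruct (hli V hV) as [i [hi ->]]. eauto.
Qed.

Lemma compact_image (X Y : Type) (tX : Topology X) (tY : Topology Y) (f : X -> Y) :
  compact tX -> continuous tX tY f -> (forall y, exists x, f x = y) -> compact tY.
Proof.
  intros hc hf hsurj F hF hcov.
  destruct (compact_indexed (fun (i : {U | F U}) x => proj1_sig i (f x)) hc) as [li hli].
  - intros [U hU]. exact (hf U (hF U hU)).
  - intros x. destruct (hcov (f x)) as [U [hU hu]]. exists (exist _ U hU). exact hu.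
  - exists (map (@proj1_sig _ _) li). split.
    + intros U hU. apply in_map_iff in hU. destruct hU as [[V hV] [<- _]]. exact hV.
    + intros y. destruct (hsurj y) as [x <-]. destruct (hli x) as [[U hU] [hi hu]].
      exists U. split; auto. apply in_map_iff. exists (exist _ U hU). auto.
Qed.

Lemma minimal_orbit_meets (G : Group) (X : Flow G) (U : X -> Prop) :
  minimal_flow X -> is_open (ftop X) U -> (exists x, U x) ->
  forall x, exists g, U (fact X g x).
Proof.
  intros [_ hmin] hU [x0 hx0].
  destruct (hmin (fun x => forall g, ~ U (fact X g x))) as [h|h].
  - apply open_ext with (fun x => exists g, True /\ U (fact X g x)).
    + apply open_union_indexed. intros g _. exact (fact_cont X g U hU).
    + intros x; split.
      * intros [g [_ hg]] hc. exact (hc g hg).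
      * intros hn. destruct (not_all_not_ex _ _ hn) as [g hg]. eauto.
  - intros g x hx g'. rewrite <- fact_mul. apply hx.
  - intros x. destruct (not_all_not_ex _ _ (h x)) as [g hg]. eauto.
  - exfalso. apply (h x0 gone). rewrite fact_one. exact hx0.
Qed.

Lemma minimal_finite_cover (G : Group) (X : Flow G) (U : X -> Prop) :
  minimal_flow X -> is_open (ftop X) U -> (exists x, U x) ->
  exists hs : list G, forall x, exists h, In h hs /\ U (fact X h x).
Proof.
  intros hmin hU hne.
  apply (compact_indexed (fun g x => U (fact X g x)) (fcompact X)).
  - intros g. exact (fact_cont X g U hU).
  - exact (minimal_orbit_meets U hmin hU hne).
Qed.

Lemma minimal_returns_avoid (G : Group) (X : Flow G) (U : X -> Prop) :
  infinite_type G -> minimal_flow X -> is_open (ftop X) U -> (exists x, U x) ->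
  forall (y : X) (F : list G), exists c, U (fact X c y) /\ ~ In c F.
Proof.
  intros hinf hmin hU hne y F.
  destruct (minimal_finite_cover U hmin hU hne) as [hs hhs].
  destruct (hinf (flat_map (fun h => map (fun f => gmul (ginv h) f) F) hs)) as [g hg].
  destruct (hhs (fact X g y)) as [h [hh hUh]].
  exists (gmul h g). split; [rewrite fact_mul; auto|].
  intros hin. apply hg. apply in_flat_map. exists h. split; auto.
  apply in_map_iff. exists (gmul h g). split; auto. apply gmulKl.
Qed.

Lemma scp_factor (G : Group) (X Y : Flow G) (f : X -> Y) :
  flow_morphism f -> (forall y, exists x, f x = y) ->
  separated_covering X -> separated_covering Y.
Proof.
  intros [hc heq] hsurj hX D U hU [y0 hy0].
  destruct (hsurj y0) as [x0 hx0].
  destruct (hX D (fun x => U (f x))) as [S [hS hcov]].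
  - exact (hc U hU).
  - exists x0. rewrite hx0; auto.
  - exists S. split; auto. intros y. destruct (hsurj y) as [x <-].
    destruct (hcov x) as [s [hs hu]]. exists s. split; auto. rewrite <- heq; auto.
Qed.

Lemma separated_extend (G : Group) (D l : list G) :
  separated D (fun g => In g l) ->
  exists F : list G, forall c, ~ In c F -> separated D (fun g => In g (c :: l)).
Proof.
  intros hsep.
  exists (flat_map (fun d1 => flat_map (fun d2 =>
            map (fun c' => gmul (ginv d1) (gmul d2 c')) l) D) D).
  intros c hc.
  assert (hfresh : forall c' d1 d2, In c' l -> In d1 D -> In d2 D -> gmul d1 c <> gmul d2 c').
  { intros c' d1 d2 hc' hd1 hd2 e. apply hc. apply in_flat_map. exists d1. split; auto.
    apply in_flat_map. exists d2. split; auto. apply in_map_iff. exists c'. split; auto.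
    rewrite <- e. apply gmulKl. }
  intros g h [<-|hg] [<-|hh] hne d1 d2 hd1 hd2.
  - contradiction.
  - exact (hfresh h d1 d2 hh hd1 hd2).
  - intros e. exact (hfresh g d2 d1 hg hd2 hd1 (eq_sym e)).
  - exact (hsep g h hg hh hne d1 d2 hd1 hd2).
Qed.

Lemma separated_choice (G : Group) (D ks : list G) (R : G -> G -> Prop) :
  (forall k F, exists c, R k c /\ ~ In c F) ->
  exists P : list (G * G),
    (forall k, In k ks -> exists c, In (k, c) P) /\
    (forall p, In p P -> R (fst p) (snd p)) /\
    separated D (fun c => In c (map snd P)).
Proof.
  intros hR. induction ks as [|k ks [P [hk [hP hsep]]]].
  - exists nil. split; [intros k []|]. split; [intros p []|]. intros g h [].
  - destruct (separated_extend (map snd P) hsep) as [F hF].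
    destruct (hR k F) as [c [hc hcF]].
    exists ((k, c) :: P). split; [|split].
    + intros k' [<-|hk'].
      * exists c. left; auto.
      * destruct (hk k' hk') as [c' hc']. exists c'. right; auto.
    + intros p [<-|hp]; auto.
    + exact (hF c hcF).
Qed.

Lemma separated_translates (G H : Group) (pi : G -> H) (L : H -> G)
    (D cs : list G) (S' : H -> Prop) :
  is_hom pi -> (forall h, pi (L h) = h) ->
  separated D (fun c => In c cs) ->
  separated (flat_map (fun d => map (fun c => pi (gmul d c)) cs) D) S' ->
  separated D (fun g => exists c s, In c cs /\ S' s /\ g = gmul c (L s)).
Proof.
  intros hom hL hcs hS g h [c1 [s1 [hc1 [hs1 ->]]]] [c2 [s2 [hc2 [hs2 ->]]]]
    hne d1 d2 hd1 hd2 heq.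
  destruct (classic (s1 = s2)) as [<-|hs].
  - assert (hc : c1 <> c2) by (intros <-; exact (hne eq_refl)).
    apply (hcs c1 c2 hc1 hc2 hc d1 d2 hd1 hd2).
    apply gcancel_r with (L s1). rewrite <- !gmulA. exact heq.
  - apply (hS s1 s2 hs1 hs2 hs (pi (gmul d1 c1)) (pi (gmul d2 c2))).
    + apply in_flat_map. exists d1. split; auto. apply in_map_iff. eauto.
    + apply in_flat_map. exists d2. split; auto. apply in_map_iff. eauto.
    + rewrite <- (hL s1), <- (hL s2), <- !hom, <- !gmulA, heq. reflexivity.
Qed.

(** * The quotient flow [X/N] *)

Section OrbitQuotient.
Context {G H : Group} {N : G -> Prop} {pi : G -> H}.
Hypothesis hq : is_quotient_map N pi.
Hypothesis N_finite : finite_pred N.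
Variable X : Flow G.

Lemma kernel_iff (g : G) : N g <-> pi g = gone.
Proof. destruct hq as [_ [_ h]]. split; apply h. Qed.

Definition same_orbit (x y : X) : Prop := exists n, N n /\ y = fact X n x.

Lemma same_orbit_refl (x : X) : same_orbit x x.
Proof.
  exists gone. split; [apply kernel_iff, hom_one, hq|]. rewrite fact_one; auto.
Qed.

Lemma same_orbit_sym (x y : X) : same_orbit x y -> same_orbit y x.
Proof.
  intros [n [hn ->]]. exists (ginv n). split.
  - apply kernel_iff. apply kernel_iff in hn.
    rewrite (hom_inv (proj1 hq)), hn, <- (gmul1l H (ginv gone)). apply gmulVr.
  - symmetry. apply fact_inv_l.
Qed.

Lemma same_orbit_trans (x y z : X) : same_orbit x y -> same_orbit y z -> same_orbit x z.
Proof.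
  intros [n [hn ->]] [m [hm ->]]. exists (gmul m n). split.
  - apply kernel_iff. apply kernel_iff in hn. apply kernel_iff in hm.
    rewrite (proj1 hq), hn, hm, gmul1l. reflexivity.
  - rewrite fact_mul. reflexivity.
Qed.

(** Points of [X/N] are the [N]-orbits, represented as subsets of [X]. *)
Definition QT : Type := {A : X -> Prop | exists x, A = same_orbit x}.

Definition cls (x : X) : QT := exist _ (same_orbit x) (ex_intro _ x eq_refl).

Lemma qt_ext (A B : QT) : proj1_sig A = proj1_sig B -> A = B.
Proof.
  destruct A as [a pa], B as [b pb]; simpl; intros ->; f_equal; apply proof_irrelevance.
Qed.

Lemma cls_surj (A : QT) : exists x, cls x = A.
Proof. destruct A as [a [x ->]]; exists x; apply qt_ext; reflexivity. Qed.

Lemma cls_eq (x y : X) : same_orbit x y -> cls x = cls y.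
Proof.
  intros hxy. apply qt_ext; simpl. apply functional_extensionality; intro z.
  apply propositional_extensionality. split; intros h.
  - apply same_orbit_trans with x; auto. apply same_orbit_sym; auto.
  - apply same_orbit_trans with y; auto.
Qed.

Lemma cls_inj (x y : X) : cls x = cls y -> same_orbit x y.
Proof.
  intros h. apply (f_equal (@proj1_sig _ _)) in h. simpl in h.
  rewrite h. apply same_orbit_refl.
Qed.

Definition rep (A : QT) : X :=
  proj1_sig (constructive_indefinite_description _ (proj2_sig A)).

Lemma rep_spec (A : QT) : cls (rep A) = A.
Proof.
  apply qt_ext. unfold rep. destruct (constructive_indefinite_description _ _) as [x hx].
  simpl. symmetry. exact hx.
Qed.

Definition lift (h : H) : G :=
  proj1_sig (constructive_indefinite_description _ (proj1 (proj2 hq) h)).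

Lemma lift_spec (h : H) : pi (lift h) = h.
Proof. unfold lift. destruct (constructive_indefinite_description _ _) as [g hg]. exact hg. Qed.

Definition qact (h : H) (A : QT) : QT := cls (fact X (lift h) (rep A)).

Lemma qact_cls (h : H) (g : G) (x : X) : pi g = h -> qact h (cls x) = cls (fact X g x).
Proof.
  intros hg. unfold qact. apply cls_eq.
  assert (hr : same_orbit (rep (cls x)) x) by (apply cls_inj; apply rep_spec).
  revert hr. generalize (rep (cls x)). intros r [n [hn ->]].
  exists (gmul (gmul g n) (ginv (lift h))). split.
  - apply kernel_iff. apply kernel_iff in hn.
    rewrite (proj1 hq), (proj1 hq), hn, (hom_inv (proj1 hq)), gmul1r, hg, lift_spec.
    apply gmulVr.
  - rewrite <- !fact_mul, gmulVKr. reflexivity.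
Qed.

Lemma qact_one (A : QT) : qact gone A = A.
Proof.
  destruct (cls_surj A) as [x <-]. rewrite (qact_cls x (hom_one (proj1 hq))).
  rewrite fact_one; auto.
Qed.

Lemma qact_mul (h k : H) (A : QT) : qact (gmul h k) A = qact h (qact k A).
Proof.
  destruct (cls_surj A) as [x <-].
  rewrite (qact_cls x (lift_spec k)), (qact_cls _ (lift_spec h)).
  rewrite (@qact_cls (gmul h k) (gmul (lift h) (lift k)) x).
  - rewrite fact_mul; auto.
  - rewrite (proj1 hq), !lift_spec; auto.
Qed.

Definition qtop : Topology QT.
Proof.
  refine {| is_open := fun W => is_open (ftop X) (fun x => W (cls x)) |}.
  - exact (open_full (ftop X)).
  - intros U V hU hV. exact (open_inter (ftop X) _ _ hU hV).
  - intros F hF.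
    apply open_ext with (fun x => exists U, F U /\ (fun y => U (cls y)) x).
    + apply open_union_indexed. exact hF.
    + intros x; split; auto.
Defined.

Lemma qact_cont (h : H) : continuous qtop qtop (qact h).
Proof.
  intros V hV. simpl in *.
  apply open_ext with (fun x => V (cls (fact X (lift h) x))).
  - exact (fact_cont X (lift h) _ hV).
  - intros x. rewrite (qact_cls x (lift_spec h)). tauto.
Qed.

Lemma qtop_compact : compact qtop.
Proof.
  apply (compact_image (f := cls) (fcompact X)).
  - intros V hV. exact hV.
  - exact cls_surj.
Qed.

Definition img (U : X -> Prop) : QT -> Prop := fun A => exists z, A = cls z /\ U z.

(** [cls] is an open map: the saturation of [U] is a union of translates. *)
Lemma img_open (U : X -> Prop) : is_open (ftop X) U -> is_open qtop (img U).
Proof.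
  intros hU. simpl. unfold img.
  apply open_ext with (fun w => exists n, N n /\ U (fact X n w)).
  - apply open_union_indexed. intros n _. exact (fact_cont X n U hU).
  - intros w; split.
    + intros [n [hn hu]]. exists (fact X n w). split; auto. apply cls_eq. exists n; auto.
    + intros [z [hz hu]]. apply cls_inj in hz. destruct hz as [n [hn ->]]. eauto.
Qed.

(** Finiteness of [N] makes [X/N] Hausdorff: separate [x] from the finitely
    many points of the orbit of [y], and saturate. *)
Lemma qtop_hausdorff : hausdorff qtop.
Proof.
  destruct (finite_pred_exact N_finite) as [nl hnl].
  intros A B hAB.
  destruct (cls_surj A) as [x <-]. destruct (cls_surj B) as [y <-].
  destruct (@separate_from_finite _ (ftop X) x (map (fun m => fact X m y) nl)
              (fhausdorff X)) as [U [hU [hx hext]]].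
  { intros p hp e. apply in_map_iff in hp. destruct hp as [m [<- hm]].
    apply hAB, cls_eq, same_orbit_sym. exists m. split; auto. apply hnl; auto. }
  set (V := fun w => forall m, In m nl -> exterior (ftop X) U (fact X m w)).
  exists (img U), (img V).
  split; [apply img_open; auto|].
  split; [apply img_open, open_inter_list; intros m _;
          exact (fact_cont X m _ (exterior_open (ftop X) U))|].
  split; [exists x; auto|].
  split.
  - exists y. split; [reflexivity|]. intros m hm. apply hext, in_map_iff. eauto.
  - intros C [[z [-> hz]] [w [hzw hw]]].
    apply cls_inj, same_orbit_sym in hzw. destruct hzw as [k [hk ->]].
    exact (exterior_disjoint (hw k (proj2 (hnl k) hk)) hz).
Qed.

Definition QFlow : Flow H :=
  {| fcar := QT; ftop := qtop; fact := qact;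
     fact_one := qact_one; fact_mul := qact_mul; fact_cont := qact_cont;
     fcompact := qtop_compact; fhausdorff := qtop_hausdorff |}.

Lemma quotient_minimal : minimal_flow X -> minimal_flow QFlow.
Proof.
  intros [[x0 _] hmin]. split; [exists (cls x0); auto|].
  intros C hC hinv.
  destruct (hmin (fun x => C (cls x))) as [h|h].
  - exact hC.
  - intros g x hx. rewrite <- (qact_cls x (eq_refl (pi g))). apply (hinv (pi g)); auto.
  - left. intros A; destruct (cls_surj A) as [x <-]; apply h.
  - right. intros A; destruct (cls_surj A) as [x <-]; apply h.
Qed.

Lemma scp_of_quotient :
  infinite_type G -> minimal_flow X -> separated_covering QFlow -> separated_covering X.
Proof.
  intros hinf hmin hQ D U hU [x0 hx0].
  destruct (finite_pred_exact N_finite) as [nl hnl].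
  (* a D-separated choice of return times [c_k] of [k^-1 x0] to [U], [k] in [N] *)
  destruct (separated_choice _ D nl (fun k c => U (fact X c (fact X (ginv k) x0))))
    as [P [hPk [hPU hPsep]]].
  { intros k F. exact (minimal_returns_avoid U hinf hmin hU (ex_intro _ x0 hx0) _ F). }
  set (V := fun z => forall p, In p P -> U (fact X (snd p) (fact X (ginv (fst p)) z))).
  assert (hV : is_open (ftop X) V).
  { apply open_inter_list. intros p _.
    exact (fact_cont X (ginv (fst p)) _ (fact_cont X (snd p) U hU)). }
  destruct (hQ (flat_map (fun d => map (fun c => pi (gmul d c)) (map snd P)) D) (img V))
    as [S' [hS'sep hS'cov]].
  - exact (img_open V hV).
  - exists (cls x0), x0. split; [reflexivity|exact hPU].
  - exists (fun g => exists c s, In c (map snd P) /\ S' s /\ g = gmul c (lift s)). split.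
    + exact (separated_translates _ _ (proj1 hq) lift_spec hPsep hS'sep).
    + intros x. destruct (hS'cov (cls x)) as [s [hs hv]].
      simpl in hv. rewrite (qact_cls x (lift_spec s)) in hv.
      destruct hv as [z [hz hVz]]. apply cls_inj in hz. destruct hz as [k [hk ->]].
      destruct (hPk k (proj2 (hnl k) hk)) as [c hc].
      exists (gmul c (lift s)). split.
      * exists c, s. split; [apply in_map_iff; exists (k, c); auto|auto].
      * specialize (hVz (k, c) hc). simpl in hVz.
        rewrite fact_inv_l, <- fact_mul in hVz. exact hVz.
Qed.
End OrbitQuotient.

Theorem lemma6p3 (G : Group) (N : G -> Prop) (H : Group) (pi : G -> H) :
  countable_type G -> infinite_type G ->
  is_normal_subgroup N -> finite_pred N ->
  is_quotient_map N pi ->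
  (exists MH : Flow H, universal_minimal_flow MH /\ separated_covering MH) ->
  forall MG : Flow G, universal_minimal_flow MG -> separated_covering MG.
Proof.
  intros _ hinf _ hfin hq [MH [[_ huniv] hscpMH]] MG [hmin _].
  (* M(H) maps onto the minimal H-flow MG/N, which therefore has the property *)
  destruct (huniv (QFlow hq hfin MG) (quotient_minimal hq hfin hmin)) as [f [hf hsurj]].
  apply (scp_of_quotient (hq := hq) (N_finite := hfin) hinf hmin).
  exact (scp_factor hf hsurj hscpMH).
Qed.
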